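(* Let $A=\mathrm{diag}(\lambda_1,\dots,\lambda_k)$ with distinct real $\lambda_j$, $|\lambda_j|>1$, and let $\mathbf 1\in\mathbb R^k$ be the all-ones vector. Let $M$ be the unique solution of the Lyapunov equation $M=A^{-1}MA^{-T}+\mathbf 1\mathbf 1^T$. Then $M\succ0$ and $$\mathbf 1^TM^{-1}\mathbf 1=1-|\det A|^{-2}.$$ *)

From HB Require Import structures.
From mathcomp Require Import all_boot all_order all_algebra.
Set Implicit Arguments. Unset Strict Implicit. Unset Printing Implicit Defensive.
Import Order.TTheory GRing.Theory Num.Theory.
Local Open Scope ring_scope.

Definition posdef (R : realFieldType) (k : nat) (M : 'M[R]_k) : Prop :=
  M^T = M /\ forall x : 'cV[R]_k, x != 0 -> 0 < (x^T *m M *m x) 0 0.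

From HB Require Import structures.
From mathcomp Require Import all_boot all_order all_algebra.
From mathcomp Require Import ring lra.
Set Implicit Arguments. Unset Strict Implicit.
Import Order.TTheory GRing.Theory Num.Theory.
Local Open Scope ring_scope.

(* With mu_j = 1 / lam_j, the Lyapunov equation forces M_ij = 1 / (1 - mu_i mu_j),
   a Cauchy (Szego) kernel on points of the unit interval.  Its positive
   definiteness comes from the Blaschke factor phi_a(b) = (b - a) / (1 - a b):
   the kernel identity
     1 / (1 - b c) = (1 - a^2) / ((1 - a b)(1 - a c)) + phi_a(b) phi_a(c) / (1 - b c)
   splits the quadratic form into a square plus the same form with one point
   fewer, since phi_a vanishes exactly at a.
   For the second claim, the equation reads D M D = M - 1 1^T = M (I - M^-1 1 1^T)
   with D = A^-1; taking determinants and using det (I - w r) = 1 - r w gives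
   det(D)^2 = 1 - 1^T M^-1 1. *)

Section BlaschkeFactor.
Variable R : realFieldType.
Implicit Types a b c : R.

Lemma one_sub_mul_gt0 a b : `|a| < 1 -> `|b| < 1 -> 0 < 1 - a * b.
Proof.
move=> ha hb; have := ler_norm (a * b); rewrite normrM => hab.
have := normr_ge0 a; have := normr_ge0 b; nra.
Qed.

Definition blaschke a b := (b - a) / (1 - a * b).

Lemma blaschke_eq0 a b : `|a| < 1 -> `|b| < 1 -> (blaschke a b == 0) = (b == a).
Proof.
move=> ha hb; rewrite /blaschke mulf_eq0 invr_eq0 subr_eq0.
by rewrite (gt_eqF (one_sub_mul_gt0 ha hb)) orbF.
Qed.

Lemma cauchy_kernel_blaschke a b c : `|a| < 1 -> `|b| < 1 -> `|c| < 1 ->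
  (1 - b * c)^-1 = (1 - a ^+ 2) * ((1 - a * b)^-1 * (1 - a * c)^-1)
                   + blaschke a b * blaschke a c * (1 - b * c)^-1.
Proof.
move=> ha hb hc; rewrite /blaschke.
have := one_sub_mul_gt0 ha hb; have := one_sub_mul_gt0 ha hc.
have := one_sub_mul_gt0 hb hc => hbc hac hab.
by field; rewrite !lt0r_neq0.
Qed.

End BlaschkeFactor.

Section CauchyForm.
Variables (R : realFieldType) (k : nat) (mu : 'I_k -> R).
Hypothesis mu_lt1 : forall i, `|mu i| < 1.
Implicit Types y : 'I_k -> R.

Definition cauchy_form y := \sum_i \sum_j y i * y j * (1 - mu i * mu j)^-1.

Lemma cauchy_form_blaschke a y : `|a| < 1 ->
  cauchy_form y = (1 - a ^+ 2) * (\sum_i y i / (1 - a * mu i)) ^+ 2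
                  + cauchy_form (fun i => y i * blaschke a (mu i)).
Proof.
move=> ha; rewrite /cauchy_form [(\sum_i _) ^+ 2]expr2 big_distrl mulr_sumr -big_split /=.
apply: eq_bigr => i _; rewrite big_distrr mulr_sumr -big_split /=.
apply: eq_bigr => j _; rewrite {1}(cauchy_kernel_blaschke ha (mu_lt1 i) (mu_lt1 j)).
ring.
Qed.

Hypothesis mu_inj : injective mu.

Lemma cauchy_form_gt0_on n (S : {set 'I_k}) y : #|S| = n ->
  (forall i, i \notin S -> y i = 0) -> (exists i, y i != 0) -> 0 < cauchy_form y.
Proof.
elim: n S y => [|n IHn] S y cardS y_out [m ym_neq0].
  by move: ym_neq0; rewrite y_out ?(cards0_eq cardS) ?inE ?eqxx.
have mS : m \in S by apply: contraNT ym_neq0 => /y_out ->.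
pose z i := y i * blaschke (mu m) (mu i).
rewrite (cauchy_form_blaschke y (mu_lt1 m)).
have a2_gt0 : 0 < 1 - mu m ^+ 2 by rewrite expr2 one_sub_mul_gt0.
have [/existsP[i zi_neq0] | /existsPn z_eq0] := boolP [exists i, z i != 0].
  have z_out j : j \notin S :\ m -> z j = 0.
    rewrite /z !inE negb_and negbK => /orP[/eqP-> | /y_out->]; last by rewrite mul0r.
    by rewrite /blaschke subrr mul0r mulr0.
  have cardSm : #|S :\ m| = n by move: cardS; rewrite (cardsD1 m S) mS => -[].
  have := IHn _ z cardSm z_out.
  have := sqr_ge0 (\sum_i y i / (1 - mu m * mu i)).
  by move=> sq_ge0 /(_ (ex_intro _ i zi_neq0)); nra.
have z0 i : z i = 0 by apply/eqP/negPn/z_eq0.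
have y_off i : i != m -> y i = 0.
  move=> im; have /eqP := z0 i; rewrite mulf_eq0 => /orP[/eqP // |].
  by rewrite blaschke_eq0 // => /eqP/mu_inj/eqP; rewrite (negbTE im).
have -> : cauchy_form z = 0.
  by rewrite /cauchy_form big1 // => i _; rewrite big1 // => j _; rewrite z0 !mul0r.
rewrite addr0 (bigD1 m) //= big1 ?addr0 => [|i /y_off->]; last by rewrite mul0r.
rewrite mulr_gt0 // exprn_even_gt0 //= mulf_neq0 // invr_eq0.
by rewrite gt_eqF // one_sub_mul_gt0.
Qed.

Lemma cauchy_form_gt0 y : (exists i, y i != 0) -> 0 < cauchy_form y.
Proof. by apply: (cauchy_form_gt0_on (erefl #|[set: 'I_k]|)) => i; rewrite inE. Qed.

End CauchyForm.

Lemma quadform_sum (R : comPzRingType) k (M : 'M[R]_k) (x : 'cV[R]_k) :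
  (x^T *m M *m x) 0 0 = \sum_i \sum_j x i 0 * x j 0 * M i j.
Proof.
rewrite mxE; under eq_bigr => j _ do rewrite mxE big_distrl /=.
rewrite exchange_big; apply: eq_bigr => i _; apply: eq_bigr => j _.
by rewrite !mxE mulrAC.
Qed.

Lemma posdef_unitmx (R : realFieldType) k (M : 'M[R]_k) : posdef M -> M \in unitmx.
Proof.
case=> _ M_pos; rewrite unitmxE unitfE; apply/negP => /det0P[v v_neq0 vM0].
by have := M_pos v^T; rewrite trmx_eq0 trmxK vM0 mul0mx mxE ltxx => /(_ v_neq0).
Qed.

Lemma det_1B_mul (R : comPzRingType) n (w : 'cV[R]_n) (r : 'rV[R]_n) :
  \det (1%:M - w *m r) = 1 - (r *m w) 0 0.
Proof.
pose X := block_mx (1%:M : 'M[R]_1) r w 1%:M.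
pose P := block_mx (1%:M : 'M[R]_1) 0 (- w) 1%:M.
have PX : P *m X = block_mx 1%:M r 0 (1%:M - w *m r).
  by rewrite mulmx_block !mul1mx !mul0mx !addr0 mulmx1 addNr mulNmx addrC.
have XP : X *m P = block_mx (1%:M - r *m w) r 0 1%:M.
  by rewrite mulmx_block !mulmx1 !mulmx0 !add0r mul1mx mulmxN addrN.
have detP : \det P = 1 by rewrite det_lblock !det1 mulr1.
have := congr1 determinant PX; rewrite det_mulmx detP mul1r det_ublock det1 mul1r => <-.
have := congr1 determinant XP; rewrite det_mulmx detP mulr1 det_ublock det1 mulr1 => ->.
by rewrite det_mx11 !mxE.
Qed.

Lemma lyapunov_det (R : fieldType) k (D M : 'M[R]_k) (u : 'cV[R]_k) :
  M = D *m M *m D^T + u *m u^T -> M \in unitmx ->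
  1 - (u^T *m invmx M *m u) 0 0 = \det D ^+ 2.
Proof.
move=> eqM uM.
have DMD : D *m M *m D^T = M *m (1%:M - invmx M *m u *m u^T).
  by rewrite mulmxBr mulmx1 !mulmxA mulmxV // mul1mx {2}eqM addrK.
have := congr1 determinant DMD; rewrite !det_mulmx det_tr det_1B_mul -mulmxA.
have detM_neq0 : \det M != 0 by rewrite -unitfE -unitmxE.
by move=> detDMD; apply: (mulfI detM_neq0); rewrite -detDMD; ring.
Qed.

Lemma invmx_diag (R : fieldType) k (lam : 'I_k -> R) : (forall j, lam j != 0) ->
  invmx (diag_mx (\row_j lam j)) = diag_mx (\row_j (lam j)^-1).
Proof.
move=> lam_neq0; set L := diag_mx _.
have LD : L *m diag_mx (\row_j (lam j)^-1) = 1%:M.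
  rewrite mulmx_diag -diag_const_mx; congr diag_mx; apply/matrixP => i j.
  by rewrite !mxE divff.
have [uL _] := mulmx1_unit LD.
by rewrite -[RHS](mulKmx uL) LD mulmx1.
Qed.

Lemma lyapunov_diag_entries (R : fieldType) k (mu : 'I_k -> R) (M : 'M[R]_k) :
  (forall i j, mu i * mu j != 1) ->
  M = diag_mx (\row_j mu j) *m M *m diag_mx (\row_j mu j)
      + (const_mx 1 : 'cV[R]_k) *m (const_mx 1 : 'cV[R]_k)^T ->
  forall i j, M i j = (1 - mu i * mu j)^-1.
Proof.
move=> mu_neq1 eqM i j.
have Mij : M i j = mu i * M i j * mu j + 1.
  by rewrite {1}eqM mul_mx_diag mul_diag_mx !mxE big_ord1 !mxE mulr1.
have nz : 1 - mu i * mu j != 0 by rewrite subr_eq0 eq_sym.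
apply: (mulIf nz); rewrite mulVf //.
by rewrite mulrBr mulr1 {1}Mij; ring.
Qed.

Lemma posdef_cauchy (R : realFieldType) k (mu : 'I_k -> R) (M : 'M[R]_k) :
  (forall i, `|mu i| < 1) -> injective mu ->
  (forall i j, M i j = (1 - mu i * mu j)^-1) -> posdef M.
Proof.
move=> mu_lt1 mu_inj Mij; split.
  by apply/matrixP => i j; rewrite mxE !Mij mulrC.
move=> x x_neq0; rewrite quadform_sum.
under eq_bigr => i _ do under eq_bigr => j _ do rewrite Mij.
apply: (cauchy_form_gt0 mu_lt1 mu_inj (y := fun i => x i 0)).
apply/existsP; apply: contraNT x_neq0 => /existsPn x0.
by apply/eqP/matrixP => i j; rewrite ord1 mxE; apply/eqP/negPn.
Qed.

Theorem mainTheorem5 (R : realFieldType) (k : nat) (lam : 'I_k -> R)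
    (Hdist : injective lam) (Habs : forall j, 1 < `|lam j|)
    (M : 'M[R]_k)
    (HM : M = invmx (diag_mx (\row_j lam j)) *m M *m (invmx (diag_mx (\row_j lam j)))^T
              + (const_mx 1 : 'cV[R]_k) *m (const_mx 1 : 'cV[R]_k)^T) :
  posdef M /\
  ((const_mx 1 : 'cV[R]_k)^T *m invmx M *m (const_mx 1 : 'cV[R]_k)) 0 0
    = 1 - `|\det (diag_mx (\row_j lam j))| ^- 2.
Proof.
pose mu j := (lam j)^-1.
have lam_neq0 j : lam j != 0 by rewrite -normr_gt0 (lt_trans _ (Habs j)).
have mu_lt1 j : `|mu j| < 1 by rewrite normfV invf_lt1 // (lt_trans _ (Habs j)).
have mu_inj : injective mu by move=> i j /(congr1 GRing.inv); rewrite !invrK => /Hdist.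
have M_pd : posdef M.
  apply: (posdef_cauchy mu_lt1 mu_inj); apply: lyapunov_diag_entries.
    by move=> i j; rewrite eq_sym -subr_eq0 lt0r_neq0 ?one_sub_mul_gt0.
  by rewrite {1}HM invmx_diag // tr_diag_mx.
split=> //; have := lyapunov_det HM (posdef_unitmx M_pd).
rewrite det_inv exprVn -real_normK ?num_real // => <-.
by rewrite opprB addrCA subrr addr0.
Qed.
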